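(* Let $f$ be a DNF with $k$ terms and let $y\in\{0,1\}^n$ satisfy $f_{>\tau}$ and not $f_{\le\tau}$ ($\tau=1000k$). Fix any permutation $\pi$ and let $z_0,z_1,\dots$ be the sweep process started at $y$. Fix an index $i$ such that $(z_i)_a=y_a$ for all $a\in P(y)$, and let $U_i$ be the set of unanimous indices of $\mathcal{T}_f(z_i)$. Let $j\in[n]$ be such that some stripped term in $\mathcal{T}_f(z_i)\setminus(P(y)\cup U_i)$ contains a literal on $x_j$. Then $\pi(t)\neq j$ for all $t<i$.
   Context: Terms are sets of literals, a DNF is a set of terms; $g_{\le L}$ / $g_{>L}$ are the sub-DNFs of terms of length $\le L$ / $>L$. $\mathcal{T}_f(x)$ is the set of terms of $f$ satisfied by $x$. Protected set $P(y)$: for each term $T\in f$ not satisfied by $y$, take the literal of $T$ with smallest index not satisfied by $y$; $P(y)$ is the set of these indices. Stripped term: for a term $T$ and $S\subseteq[n]$, $T\setminus S$ removes from $T$ all literals $x_i,\overline{x_i}$ with $i\in S$; for a set of terms $\mathcal{T}$, $\mathcal{T}\setminus S=\{T\setminus S: T\in\mathcal{T}\}$. Unanimous indices of a set of terms $\mathcal{T}$: all $i\in[n]$ such that every term in $\mathcal{T}$ contains $x_i$, or every term in $\mathcal{T}$ contains $\overline{x_i}$. Sweep process: given $y$ with $f(y)=1$ and a permutation $\pi$ listing $[n]$ as $\pi(0),\dots,\pi(n-1)$, $z_0=y$, and $z_{t+1}=z_t^{\oplus\pi(t)}$ if $f(z_t^{\oplus\pi(t)})=1$, else $z_{t+1}=z_t$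 ($x^{\oplus j}$ is $x$ with bit $j$ flipped). *)

From mathcomp Require Import all_boot all_fingroup.
Set Implicit Arguments. Unset Strict Implicit. Unset Printing Implicit Defensive.

(* Boolean points x in {0,1}^n are functions 'I_n -> bool.
   A literal is a pair (i, b): b = true is x_i, b = false is ~x_i.
   A term is a finite set of literals, a DNF a finite set of terms. *)
Definition literal n := ('I_n * bool)%type.
Definition term n := {set literal n}.
Definition dnf n := {set term n}.

Section Defs.
Variable n : nat.

Definition lit_sat (x : 'I_n -> bool) (l : literal n) : bool := x l.1 == l.2.

Definition term_sat (x : 'I_n -> bool) (T : term n) : bool :=
  [forall l in T, lit_sat x l].

Definition dnf_eval (f : dnf n) (x : 'I_n -> bool) : bool :=
  [exists T in f, term_sat x T].

Definition dnf_le (f : dnf n) (L : nat) : dnf n := [set T in f | #|T| <= L].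
Definition dnf_gt (f : dnf n) (L : nat) : dnf n := [set T in f | L < #|T|].

Definition sat_terms (f : dnf n) (x : 'I_n -> bool) : {set term n} :=
  [set T in f | term_sat x T].

Definition min_unsat_index (y : 'I_n -> bool) (T : term n) (i : 'I_n) : bool :=
  [exists b, ((i, b) \in T) && ~~ lit_sat y (i, b)] &&
  [forall j : 'I_n, (j < i) ==> ~~ [exists b, ((j, b) \in T) && ~~ lit_sat y (j, b)]].

Definition protected (f : dnf n) (y : 'I_n -> bool) : {set 'I_n} :=
  [set i | [exists T in f, ~~ term_sat y T && min_unsat_index y T i]].

Definition strip (T : term n) (S : {set 'I_n}) : term n :=
  [set l in T | l.1 \notin S].
Definition strip_terms (TT : {set term n}) (S : {set 'I_n}) : {set term n} :=
  [set strip T S | T in TT].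

Definition unanimous (TT : {set term n}) : {set 'I_n} :=
  [set i | [forall T in TT, (i, true) \in T] || [forall T in TT, (i, false) \in T]].

Definition flip (x : 'I_n -> bool) (j : 'I_n) : 'I_n -> bool :=
  fun a => if a == j then ~~ x a else x a.

(* sweep process: sweep f y pi t = z_t, for t = 0..n (constant after n) *)
Fixpoint sweep (f : dnf n) (y : 'I_n -> bool) (pi : {perm 'I_n}) (t : nat)
  : 'I_n -> bool :=
  match t with
  | 0 => y
  | t'.+1 =>
      let z := sweep f y pi t' in
      match insub t' with
      | Some o => let z' := flip z (pi o) in if dnf_eval f z' then z' else z
      | None => z
      end
  end.

End Defs.

From mathcomp Require Import all_boot all_fingroup.
Set Implicit Arguments. Unset Strict Implicit. Unset Printing Implicit Defensive.

(* Let z = z_i.  A term satisfied by z is satisfied by y: otherwise its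
   least index where y fails it is protected, so z agrees with y there and
   fails the term too.  Each coordinate is visited once by the sweep, so
   between times 0 and i it takes only the values y_a and (z_i)_a; hence a
   term satisfied by both y and z_i is satisfied by every z_m, m <= i.
   Now j lies on a satisfied term, so (z_i)_j = y_j, and as j is not
   unanimous some satisfied term T' has no literal on x_j.  If j = pi(t) with
   t < i, the flip of j at time t was rejected, as (z_i)_j = y_j; yet
   z_t^(+j) satisfies T'. *)

Section Terms.
Variable n : nat.
Implicit Types (x y z : 'I_n -> bool) (T : term n) (f : dnf n).

Lemma lit_sat_flip x j (l : literal n) :
  l.1 != j -> lit_sat (flip x j) l = lit_sat x l.
Proof. by rewrite /lit_sat /flip => /negbTE ->. Qed.

Lemma term_sat_flip x j T :
  (forall b, (j, b) \notin T) -> term_sat (flip x j) T = term_sat x T.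
Proof.
move=> freeT; apply: eq_forallb_in => -[a b] /= abT.
apply: lit_sat_flip; apply: contraNneq (freeT b) => /= <-.
by rewrite abT.
Qed.

Lemma sat_lit_eq x y T (l : literal n) :
  term_sat x T -> term_sat y T -> l \in T -> x l.1 = y l.1.
Proof.
by move=> /forall_inP/(_ l) xT /forall_inP/(_ l) yT lT; rewrite (eqP (xT lT)) (eqP (yT lT)).
Qed.

Lemma exists_min_unsat_index y T :
  ~~ term_sat y T -> exists a, min_unsat_index y T a.
Proof.
move=> /forall_inPn[l lT ly].
pose P a := [exists b, ((a, b) \in T) && ~~ lit_sat y (a, b)].
have Pl : P l.1 by apply/existsP; exists l.2; rewrite -surjective_pairing lT.
have [a Pa minA] := arg_minnP (fun a : 'I_n => val a) Pl.
exists a; apply/andP; split=> //.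
apply/forallP => c; apply/implyP => ca; apply/negP => Pc.
by move: (minA c Pc); rewrite leqNgt ca.
Qed.

Lemma protected_agree_sat f y z T :
  (forall a, a \in protected f y -> z a = y a) ->
  T \in sat_terms f z -> term_sat y T.
Proof.
move=> zyP; rewrite inE => /andP[Tf zT]; apply/negPn/negP => yT.
have [a minA] := exists_min_unsat_index yT.
have aP : a \in protected f y by rewrite inE; apply/existsP; exists T; rewrite Tf yT.
case/andP: minA => /existsP[b /andP[abT /negP yab]] _; apply: yab.
by move/forall_inP/(_ _ abT): zT; rewrite /lit_sat /= zyP.
Qed.

Lemma strip_terms_lit (TT : {set term n}) (S : {set 'I_n}) (S' : term n) j b :
  S' \in strip_terms TT S -> (j, b) \in S' ->
  exists2 T, T \in TT & ((j, b) \in T) && (j \notin S).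
Proof.
by case/imsetP=> T TT_T ->; rewrite inE => jbT; exists T.
Qed.

Lemma not_unanimous_free_term (TT : {set term n}) z j :
  (forall T, T \in TT -> term_sat z T) -> j \notin unanimous TT ->
  exists2 T, T \in TT & forall b, (j, b) \notin T.
Proof.
move=> zTT; rewrite inE negb_or => /andP[notT notF].
have [T TT_T jzT] : exists2 T, T \in TT & (j, z j) \notin T.
  by case: (z j) notT notF => [/forall_inPn | _ /forall_inPn] [T ? ?]; exists T.
exists T => // b; case: (eqVneq b (z j)) => [-> // | bz].
apply/negP => jbT; move/forall_inP/(_ _ jbT): (zTT T TT_T).
by rewrite /lit_sat eq_sym (negbTE bz).
Qed.

End Terms.

Section Sweep.
Variables (n : nat) (f : dnf n) (y : 'I_n -> bool) (pi : {perm 'I_n}).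
Local Notation z := (sweep f y pi).

Lemma sweepS (t : 'I_n) :
  z t.+1 = let w := flip (z t) (pi t) in if dnf_eval f w then w else z t.
Proof. by rewrite /= valK. Qed.

Lemma sweep_before_visit m a : m <= (pi^-1 a)%g -> z m a = y a.
Proof.
elim: m => [//|m IHm] /= visit; have IHa := IHm (ltnW visit).
case: insubP => [t _ tm|_] //; case: ifP => _ //; rewrite /flip.
have -> : (a == pi t) = false.
  by apply/negbTE; apply: contraTneq visit => ->; rewrite permK tm ltnn.
exact: IHa.
Qed.

Lemma sweep_after_visit m a : (pi^-1 a)%g < m -> z m a = z (pi^-1 a)%g.+1 a.
Proof.
elim: m => [//|m IHm]; rewrite ltnS leq_eqVlt => /orP[/eqP <- // | visit] /=.
case: insubP => [t _ tm|_]; last exact: IHm.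
case: ifP => _; last exact: IHm.
rewrite /flip; have -> : (a == pi t) = false.
  by apply/negbTE; apply: contraTneq visit => ->; rewrite permK tm ltnn.
exact: IHm.
Qed.

Lemma sweep_between m i a : m <= i -> z m a = y a \/ z m a = z i a.
Proof.
move=> mi; case: (ltnP (pi^-1 a)%g m) => visit.
  by right; rewrite !sweep_after_visit // (leq_trans visit mi).
by left; apply: sweep_before_visit.
Qed.

Lemma term_sat_sweep_between m i T :
  m <= i -> term_sat y T -> term_sat (z i) T -> term_sat (z m) T.
Proof.
move=> mi /forall_inP yT /forall_inP ziT; apply/forall_inP => l lT.
by rewrite /lit_sat; case: (sweep_between l.1 mi) => ->; [apply: yT | apply: ziT].
Qed.

Lemma sweep_unchanged_flip_rejected (t : 'I_n) i :
  t < i -> z i (pi t) = y (pi t) -> ~~ dnf_eval f (flip (z t) (pi t)).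
Proof.
move=> ti; rewrite sweep_after_visit permK // sweepS /=.
case: ifP => // _; rewrite /flip eqxx sweep_before_visit ?permK //.
by case: (y _).
Qed.

End Sweep.

Theorem lemma4p8 (n : nat) (f : dnf n) (y : 'I_n -> bool) (pi : {perm 'I_n})
    (i : nat) (j : 'I_n) :
  let k := #|f| in
  let tau := 1000 * k in
  dnf_eval (dnf_gt f tau) y ->
  ~~ dnf_eval (dnf_le f tau) y ->
  i <= n ->
  (forall a, a \in protected f y -> sweep f y pi i a = y a) ->
  let Ui := unanimous (sat_terms f (sweep f y pi i)) in
  (exists2 S, S \in strip_terms (sat_terms f (sweep f y pi i)) (protected f y :|: Ui)
     & exists b, (j, b) \in S) ->
  forall t : 'I_n, t < i -> pi t != j.
Proof.
move=> k tau _ _ _ zyP Ui [S HS [b jbS]] t ti; apply/eqP => tj; subst j.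
set z := sweep f y pi i in zyP Ui HS.
have zsat T : T \in sat_terms f z -> term_sat z T by rewrite inE => /andP[].
have [T Tz /andP[jbT]] := strip_terms_lit HS jbS.
rewrite in_setU negb_or => /andP[_ jU].
have zyj : z (pi t) = y (pi t).
  exact: (sat_lit_eq (zsat T Tz) (protected_agree_sat zyP Tz) jbT).
have [T' T'z freeT'] := not_unanimous_free_term zsat jU.
have /negP := sweep_unchanged_flip_rejected ti zyj; apply.
have T'f : T' \in f by move: T'z; rewrite inE => /andP[].
apply/existsP; exists T'; rewrite T'f term_sat_flip //.
exact: term_sat_sweep_between (ltnW ti) (protected_agree_sat zyP T'z) (zsat T' T'z).
Qed.
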